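(* Let $f\in\mathbb{C}[X_1,\dots,X_n]$ be a radical polynomial, i.e. $f=f_1f_2\cdots f_r$ with each $f_i$ irreducible and the $f_i$ pairwise non-associate. Let $A=\mathbb{C}[X_1,\dots,X_n]/(f)$ and let $\bar f_i$ denote the image of $f_i$ in $A$. If $D$ is a locally nilpotent derivation of $A$, then $D(\bar f_i)\in \bar f_iA$ for all $1\le i\le r$.
   Context: A derivation of a $\mathbb{C}$-algebra $A$ is a $\mathbb{C}$-linear map $D:A\to A$ with $D(ab)=aD(b)+D(a)b$; it is locally nilpotent if for every $a\in A$ there is $n\in\mathbb{N}$ with $D^n(a)=0$. *)

From HB Require Import structures.
From mathcomp Require Import all_boot all_order all_algebra all_field.
Set Implicit Arguments. Unset Strict Implicit. Unset Printing Implicit Defensive.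
Import GRing.Theory.
Local Open Scope ring_scope.

(* Polynomial ring F[X_1,...,X_n], realized as the iterated univariate
   polynomial ring F[X_1][X_2]...[X_n]. *)
Fixpoint mpoly (F : fieldType) (n : nat) : idomainType :=
  match n with
  | 0 => F
  | n'.+1 => ({poly mpoly F n'} : idomainType)
  end.

Fixpoint mcst (F : fieldType) (n : nat) : F -> mpoly F n :=
  match n return F -> mpoly F n with
  | 0 => fun c => c
  | n'.+1 => fun c => (mcst n' c)%:P
  end.

Definition irreducible_elt (R : comUnitRingType) (p : R) : Prop :=
  p != 0 /\ p \isn't a GRing.unit /\
  forall a b : R, p = a * b -> a \is a GRing.unit \/ b \is a GRing.unit.

Definition associate (R : comUnitRingType) (p q : R) : Prop :=
  exists2 u : R, u \is a GRing.unit & p = u * q.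

(* A k-linear derivation of a k-algebra A, where the k-algebra structure of A
   is given by the ring map (embedding of scalars) iota : k -> A. *)
Definition is_derivation (k : fieldType) (A : comNzRingType) (iota : k -> A)
    (D : A -> A) : Prop :=
  (forall a b, D (a + b) = D a + D b) /\
  (forall (c : k) a, D (iota c * a) = iota c * D a) /\
  (forall a b, D (a * b) = a * D b + D a * b).

Definition locally_nilpotent (A : comNzRingType) (D : A -> A) : Prop :=
  forall a, exists m : nat, iter m D a = 0.

From HB Require Import structures.
From mathcomp Require Import all_boot all_order all_algebra all_field.
From Stdlib Require Import Classical.
Import GRing.Theory.
Local Open Scope ring_scope.
Set Implicit Arguments. Unset Strict Implicit.

(* Write f = f_i g with g the product of the other factors. Since f vanishes in
   A, 0 = D (f_i g) = f_i D(g) + g D(f_i); lifting D(f_i) to a polynomial d,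
   this says that f_i divides d g in the polynomial ring. By Gauss's lemma,
   iterated over the variables, the polynomial ring is factorial, so the
   irreducible f_i is prime; as it divides no f_j with j <> i, it divides d. *)

Definition dvdr (R : comUnitRingType) (a b : R) : Prop := exists c, b = c * a.

Definition prime_elt (R : comUnitRingType) (p : R) : Prop :=
  p != 0 /\ p \isn't a GRing.unit /\
  forall a b, dvdr p (a * b) -> dvdr p a \/ dvdr p b.

Section Divisibility.
Variable R : comUnitRingType.
Implicit Types p q a b : R.

Lemma dvdr0 p : dvdr p 0. Proof. by exists 0; rewrite mul0r. Qed.

Lemma dvdrB p a b : dvdr p a -> dvdr p b -> dvdr p (a - b).
Proof. by move=> [c ->] [d ->]; exists (c - d); rewrite mulrBl. Qed.

Lemma dvdr_irreducible p q :
  irreducible_elt q -> p \isn't a GRing.unit -> dvdr p q -> associate q p.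
Proof.
move=> [_ [_ qirr]] pU [c qE]; exists c => //.
by case: (qirr _ _ qE) => // pU'; rewrite pU' in pU.
Qed.

Lemma prime_dvdr_prod (I : Type) p a (s : seq I) (P : pred I) (f : I -> R) :
  prime_elt p -> dvdr p (a * \prod_(j <- s | P j) f j) ->
  dvdr p a \/ exists2 j, P j & dvdr p (f j).
Proof.
move=> [_ [_ pP]]; elim: s a => [|x s IH] a; first by rewrite big_nil mulr1; left.
rewrite big_cons; case: ifP => Px; last exact: IH.
rewrite mulrCA => /pP[|/IH//]; by right; exists x.
Qed.

End Divisibility.

Definition length_function (R : idomainType) (w : R -> nat) : Prop :=
  (forall a b, a != 0 -> b != 0 -> w (a * b) = (w a + w b)%N) /\
  (forall a, a != 0 -> (w a == 0%N) = (a \is a GRing.unit)).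

(* Unique factorization in the form: atomic, with irreducibles prime. A length
   function bounds the length of factorizations and hence gives atomicity. *)
Definition factorial (R : idomainType) : Prop :=
  (exists w : R -> nat, length_function w) /\
  forall p : R, irreducible_elt p -> prime_elt p.

Section Atomic.
Variables (R : idomainType) (w : R -> nat).
Hypothesis wM : forall a b, a != 0 -> b != 0 -> w (a * b) = (w a + w b)%N.
Hypothesis wU : forall a, a != 0 -> (w a == 0%N) = (a \is a GRing.unit).

Lemma length_ltM (a b : R) :
  a != 0 -> b != 0 -> b \isn't a GRing.unit -> (w a < w (a * b))%N.
Proof. by move=> a0 b0 bU; rewrite wM // -[X in (X < _)%N]addn0 ltn_add2l lt0n wU. Qed.

Lemma exists_irreducible_dvdr (a : R) : a != 0 -> a \isn't a GRing.unit ->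
  exists2 p, irreducible_elt p & dvdr p a.
Proof.
have [m] := ubnP (w a); elim: m a => // m IH a /ltnSE wa a0 aU.
case: (classic (irreducible_elt a)) => [airr|Nairr].
  by exists a => //; exists 1; rewrite mul1r.
have [b [c [abc [bU cU]]]] :
    exists b c, a = b * c /\ b \isn't a GRing.unit /\ c \isn't a GRing.unit.
  apply: NNPP => Nbc; apply: Nairr; split=> //; split=> // b c abc.
  case: (boolP (b \is a GRing.unit)) => bU; first by left.
  case: (boolP (c \is a GRing.unit)) => cU; first by right.
  by case: Nbc; exists b, c.
have b0 : b != 0 by apply: contraNneq a0 => b0; rewrite abc b0 mul0r.
have c0 : c != 0 by apply: contraNneq a0 => c0; rewrite abc c0 mulr0.
have [|p pirr [d bE]] := IH b _ b0 bU.
  by apply: leq_trans wa; rewrite abc length_ltM.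
by exists p => //; exists (c * d); rewrite abc bE mulrAC [d * c]mulrC.
Qed.

End Atomic.

Definition primitivep (R : idomainType) (q : {poly R}) : Prop :=
  forall p : R, prime_elt p -> ~ dvdr p%:P q.

Section PolyDivisibility.
Variable R : idomainType.
Implicit Types (a b c p : R) (f g h q r s : {poly R}).

Lemma polyC_unit c : (c%:P \is a GRing.unit) = (c \is a GRing.unit).
Proof.
rewrite poly_unitE size_polyC coefC /=.
by have [->|] := eqVneq c 0; rewrite ?unitr0.
Qed.

Lemma dvdr_polyCP c q : dvdr c%:P q <-> forall i, dvdr c q`_i.
Proof.
split=> [[d ->] i|cq]; first by exists d`_i; rewrite coefMC.
have cqi i : exists d, q`_i == d * c by have [d ->] := cq i; exists d.
exists (\poly_(i < size q) xchoose (cqi i)); apply/polyP => i.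
rewrite coefMC coef_poly; case: ltnP => [_|qi]; first exact/eqP/(xchooseP (cqi i)).
by rewrite mul0r nth_default.
Qed.

Lemma dvdr_coef_drop1M p g h : dvdr p g`_0 -> (forall i, dvdr p (g * h)`_i) ->
  forall i, dvdr p (drop_poly 1 g * h)`_i.
Proof.
move=> [c g0E] pgh i.
have gE : g = drop_poly 1 g * 'X + (g`_0)%:P.
  by apply/polyP => -[|j]; rewrite coefD coefMX coefC ?coef_drop_poly ?addn1 ?addr0 ?add0r.
have := pgh i.+1; rewrite {1}gE mulrDl mulrAC coefD coefMX coefCM /= => pghi.
rewrite -[_`_i](addrK (g`_0 * h`_i.+1)); apply: dvdrB => //.
by exists (c * h`_i.+1); rewrite g0E mulrAC.
Qed.

Lemma prime_polyC p : prime_elt p -> prime_elt p%:P.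
Proof.
move=> [p0 [pU pP]]; split; first by rewrite polyC_eq0.
split=> [|g h]; first by rewrite polyC_unit.
have [m] := ubnP (size g + size h); elim: m g h => // m IH g h /ltnSE gh_m.
move=> /dvdr_polyCP pgh; have [->|g0] := eqVneq g 0; first by left; exact: dvdr0.
wlog pg0 : g h gh_m pgh g0 / dvdr p g`_0.
  move=> sym; have := pgh 0%N; rewrite coef0M => /pP[/sym|ph0]; first exact.
  have [->|h0] := eqVneq h 0; first by right; exact: dvdr0.
  rewrite or_comm; apply: sym ph0 => //; first by rewrite addnC.
  by move=> i; rewrite mulrC.
have lt_m : (size (drop_poly 1 g) + size h < m)%N.
  by apply: leq_trans gh_m; rewrite ltn_add2r size_drop_poly subn1 ltn_predL size_poly_gt0.
have pg'h : dvdr p%:P (drop_poly 1 g * h).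
  by apply/dvdr_polyCP; exact: dvdr_coef_drop1M pg0 pgh.
case: (IH _ h lt_m pg'h) => [/dvdr_polyCP pg'|]; last by right.
by left; apply/dvdr_polyCP => -[|i] //; rewrite -addn1 -coef_drop_poly.
Qed.

Lemma dvdr_modp f r s h :
  dvdr f (r * h) -> dvdr f (s * h) -> dvdr f ((s %% r) * h).
Proof.
move=> [b rhE] [a shE].
have -> : s %% r = (lead_coef r ^+ scalp s r)%:P * s - (s %/ r) * r.
  by rewrite mul_polyC Pdiv.Idomain.divp_eq addrC addKr.
exists ((lead_coef r ^+ scalp s r)%:P * a - (s %/ r) * b).
by rewrite mulrBl -!mulrA shE rhE mulrBl !mulrA.
Qed.

Lemma irreducible_polyC c : irreducible_elt c%:P -> irreducible_elt c.
Proof.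
move=> [c0 [cU cirr]]; split; first by rewrite -polyC_eq0.
split=> [|a b cE]; first by rewrite -polyC_unit.
by rewrite -!polyC_unit; apply: cirr; rewrite cE polyCM.
Qed.

Lemma irreducible_primitive f : irreducible_elt f -> size f != 1%N -> primitivep f.
Proof.
move=> [_ [_ firr]] sf1 p [p0 [pU _]] [f' fE].
case: (firr _ _ fE); last by rewrite polyC_unit (negbTE pU).
rewrite poly_unitE => /andP[/eqP f'1 _].
by move: sf1; rewrite fE mulrC mul_polyC size_scale // f'1.
Qed.

End PolyDivisibility.

Section Gauss.
Variables (R : idomainType) (w : R -> nat).
Hypothesis wM : forall a b, a != 0 -> b != 0 -> w (a * b) = (w a + w b)%N.
Hypothesis wU : forall a, a != 0 -> (w a == 0%N) = (a \is a GRing.unit).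
Hypothesis irrP : forall p : R, irreducible_elt p -> prime_elt p.
Implicit Types (a c p : R) (f g h q r : {poly R}).

Lemma poly_content q : q != 0 ->
  exists c q1, [/\ c != 0, primitivep q1 & q = c%:P * q1].
Proof.
have [m] := ubnP (w (lead_coef q)); elim: m q => // m IH q /ltnSE wq q0.
case: (classic (primitivep q)) => [qprim|Nqprim].
  by exists 1, q; rewrite oner_neq0 mul1r.
have [p [pp [q' qE]]] : exists p, prime_elt p /\ dvdr p%:P q.
  by apply: NNPP => Nq; apply: Nqprim => p pp pq; apply: Nq; exists p.
have [p0 [pU _]] := pp.
have q'0 : q' != 0 by apply: contraNneq q0 => q'0; rewrite qE q'0 mul0r.
have [|c [q1 [c0 q1prim q'E]]] := IH q' _ q'0.
  by apply: leq_trans wq; rewrite qE lead_coefM lead_coefC length_ltM ?lead_coef_eq0.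
exists (p * c), q1; split=> //; first by rewrite mulf_neq0.
by rewrite qE q'E polyCM mulrC mulrA.
Qed.

Lemma primitive_dvdrCM a q f :
  a != 0 -> primitivep q -> dvdr q (a%:P * f) -> dvdr q f.
Proof.
move=> + qprim; have [m] := ubnP (w a); elim: m a f => // m IH a f /ltnSE wa a0 [Q afE].
have [aU|aNU] := boolP (a \is a GRing.unit).
  by exists (a^-1%:P * Q); rewrite -mulrA -afE mulrA -polyCM mulVr // mul1r.
have [p pirr [c aE]] := exists_irreducible_dvdr wM wU a0 aNU.
have pp := irrP pirr; have [p0 [pU _]] := pp.
have c0 : c != 0 by apply: contraNneq a0 => c0; rewrite aE c0 mul0r.
have [_ [_ pP]] := prime_polyC pp.
have [|[Q1 QE]|] := pP Q q; last by move/(qprim p pp).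
  by exists (c%:P * f); rewrite -afE aE polyCM mulrAC.
apply: (IH c) => //; first by apply: leq_trans wa; rewrite aE length_ltM.
exists Q1; apply: (@mulIf _ p%:P); first by rewrite polyC_eq0.
by rewrite mulrAC -polyCM -aE afE QE mulrAC.
Qed.

Lemma irreducible_dvdrM_of_pdiv f g h r :
  irreducible_elt f -> primitivep f -> r != 0 -> r %| f -> r %| g ->
  dvdr f (r * h) -> dvdr f g \/ dvdr f h.
Proof.
move=> [_ [_ firr]] fprim r0 rf rg [b rhE].
have [c [r1 [c0 r1prim rE]]] := poly_content r0.
have r1_dvdr s : r %| s -> dvdr r1 s.
  move=> /Pdiv.Idomain.modp_eq0P rs.
  apply: (@primitive_dvdrCM (lead_coef r ^+ scalp s r)) r1prim _.
    by rewrite expf_neq0 ?lead_coef_eq0.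
  exists (s %/ r * c%:P).
  by rewrite mul_polyC Pdiv.Idomain.divp_eq rs addr0 rE mulrA.
have [Q fE] := r1_dvdr f rf.
case: (firr _ _ fE) => [QU|].
  have [Q' gE] := r1_dvdr g rg.
  by left; exists (Q' * Q^-1); rewrite gE fE mulrA mulrVK.
rewrite poly_unitE => /andP[/eqP r11 _].
have r1E : r1 = (r1`_0)%:P by apply: size1_polyC; rewrite r11.
right; apply: (@primitive_dvdrCM (c * r1`_0)) fprim _.
  by apply: contraNneq r0 => cr0; rewrite rE r1E -polyCM cr0 polyC0.
by exists b; rewrite polyCM -r1E -rE.
Qed.

Lemma irreducible_poly_prime f : irreducible_elt f -> prime_elt f.
Proof.
move=> firr; have [sf1|sf1] := eqVneq (size f) 1%N.
  have fE : f = (f`_0)%:P by apply: size1_polyC; rewrite sf1.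
  by rewrite fE; apply/prime_polyC/irrP/irreducible_polyC; rewrite -fE.
have fprim := irreducible_primitive firr sf1.
have [f0 [fU _]] := firr; split=> //; split=> // g h fgh.
suff: forall r, r != 0 -> dvdr f (r * h) -> dvdr f g \/ dvdr f h.
  by apply; last by exists h; rewrite mulrC.
(* Such r are closed under pseudo-remainder, so one of minimal size
   pseudo-divides both f and g. *)
move=> r; have [m] := ubnP (size r); elim: m r => // m IH r /ltnSE rm r0 frh.
have IHmod s : dvdr f (s * h) -> ~~ (r %| s) -> dvdr f g \/ dvdr f h.
  move=> fsh rNs; apply: (IH (s %% r)); last exact: dvdr_modp.
    by apply: leq_trans rm; rewrite Pdiv.Idomain.ltn_modpN0.
  by apply: contraNneq rNs => /Pdiv.Idomain.modp_eq0P.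
have [rf|] := boolP (r %| f); last by apply: IHmod; exists h; rewrite mulrC.
have [rg|] := boolP (r %| g); last exact: IHmod.
exact: (irreducible_dvdrM_of_pdiv firr fprim r0 rf rg frh).
Qed.

End Gauss.

Lemma factorial_poly (R : idomainType) : factorial R -> factorial {poly R}.
Proof.
move=> [[w [wM wU]] irrP]; split; last exact: irreducible_poly_prime wM wU irrP.
exists (fun p : {poly R} => ((size p).-1 + w (lead_coef p))%N); split.
  move=> p q p0 q0; rewrite size_mul // lead_coefM wM ?lead_coef_eq0 //.
  rewrite -!size_poly_gt0 in p0 q0.
  by rewrite -(prednK p0) -(prednK q0) addSn addnS /= addnACA.
move=> p p0; rewrite poly_unitE addn_eq0 lead_coefE.
move: p0; rewrite -size_poly_eq0; case sp: (size p) => [|[|k]] //= _.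
by rewrite wU // -[0%N]/(1.-1) -sp -lead_coefE lead_coef_eq0 -size_poly_eq0 sp.
Qed.

Lemma factorial_mpoly (F : fieldType) (n : nat) : factorial (mpoly F n).
Proof.
elim: n => [|n IH]; last exact: factorial_poly.
split; first by exists (fun _ => 0%N); split=> //= a a0; rewrite unitfE a0.
by move=> p [p0 [pU _]]; move: pU; rewrite /= unitfE p0.
Qed.

Lemma dvdr_lift_derivation (R : comUnitRingType) (A : comNzRingType)
    (pi : {rmorphism R -> A}) (D : A -> A) (p g d : R) :
  (forall a b, D (a + b) = D a + D b) ->
  (forall a b, D (a * b) = a * D b + D a * b) ->
  (forall a, exists x, pi x = a) ->
  (forall x, pi x = 0 <-> dvdr (p * g) x) ->
  pi d = D (pi p) -> dvdr p (d * g).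
Proof.
move=> Dadd Dmul pi_surj piK dE.
have D0 : D 0 = 0 by apply: (addrI (D 0)); rewrite -Dadd !addr0.
have [e eE] := pi_surj (D (pi g)).
have pgK : pi (p * g) = 0 by apply/piK; exists 1; rewrite mul1r.
have /piK[q qE] : pi (d * g + p * e) = 0.
  by rewrite rmorphD !rmorphM dE eE addrC -Dmul -rmorphM pgK D0.
exists (q * g - e); apply: (addIr (p * e)).
by rewrite qE mulrBl [e * p]mulrC subrK mulrAC mulrA.
Qed.

Unset Implicit Arguments.
Set Strict Implicit.

Theorem corollary2p2
  (F : closedFieldType) (hF : [pchar F] =i pred0) (n r : nat)
  (fs : 'I_r -> mpoly F n)
  (hirr : forall i, irreducible_elt (fs i))
  (hnassoc : forall i j, i != j -> ~ associate (fs i) (fs j))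
  (A : comNzRingType) (pi : {rmorphism mpoly F n -> A})
  (hsurj : forall a : A, exists p : mpoly F n, pi p = a)
  (hker : forall p : mpoly F n,
      pi p = 0 <-> exists q : mpoly F n, p = q * \prod_(i < r) fs i)
  (D : A -> A)
  (hD : is_derivation (fun c : F => pi (mcst n c)) D)
  (hlnd : locally_nilpotent D) :
  forall i : 'I_r, exists a : A, D (pi (fs i)) = pi (fs i) * a.
Proof.
move=> i; have [Dadd [_ Dmul]] := hD.
have fi_prime := (factorial_mpoly F n).2 _ (hirr i).
have prodE : \prod_(j < r) fs j = fs i * \prod_(j < r | j != i) fs j.
  by rewrite (bigD1 i).
have [d dE] := hsurj (D (pi (fs i))).
have piK p : pi p = 0 <-> dvdr (fs i * \prod_(j < r | j != i) fs j) p.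
  by rewrite -prodE; exact: hker.
have [[c dcE]|[j ji fi_fj]] :=
  prime_dvdr_prod fi_prime (dvdr_lift_derivation Dadd Dmul hsurj piK dE).
  by exists (pi c); rewrite -dE dcE rmorphM mulrC.
have [_ [fiU _]] := hirr i.
by case: (hnassoc j i ji); exact: dvdr_irreducible (hirr j) fiU fi_fj.
Qed.
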